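(* In the standard LLP setup, fix $N\ge1$. If the optimistic LLP supervisor is valid, i.e. $L(G,\gamma^N_{optm})=\overline{K^\uparrow}$, then there is no run-time error in $L(G,\gamma^N_{optm})$, i.e. there is no $s\in L(G,\gamma^N_{optm})$ with $f^N_{optm}(s)=\emptyset$.
   Context: Standard LLP setup. $\Sigma=\Sigma_c\,\dot\cup\,\Sigma_{uc}$ is a finite alphabet partitioned into controllable and uncontrollable events. The plant $G$ has generated language $L(G)$ and marked language $L_m(G)$ with $L(G)=\overline{L_m(G)}$ ($\overline{M}$ = set of prefixes of strings in $M$). The legal language $K\subseteq L_m(G)$ satisfies $K=\overline{K}\cap L_m(G)$. For a prefix-closed $L$, $M$ is controllable w.r.t. $L$ if $\overline{M}\Sigma_{uc}\cap L\subseteq\overline{M}$; $K^\uparrow$ is the supremal sublanguage of $K$ controllable w.r.t. $L(G)$. For a language $L$ and $s\in\Sigma^*$: $L/s=\{t: st\in L\}$; $L|_N=\{t\in L:|t|\le N\}$; $\Sigma_{L(G)}(s)=\{\sigma\in\Sigma: s\sigma\in L(G)\}$. $M^{\uparrow/s|_N}$ is the supremal sublanguage of $M$ controllable w.r.t. $L(G)/s|_N$. Optimistic attitude: $f^N_{optm}(s)=[K/s|_N\cup(\overline{K}/s|_N\setminus\overline{K}/s|_{N-1})]^{\uparrow/s|_N}$; control policy $\gamma^N_{optm}(s)=(\overline{f^N_{optm}(s)}\cap\Sigma)\cup(\Sigma_{uc}\cap\Sigma_{L(G)}(s))$. Closed-loop language $L(G,\gamma)$: $\epsilon\in L(G,\gamma)$,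 and $s\sigma\in L(G,\gamma)$ iff $s\in L(G,\gamma)$, $s\sigma\in L(G)$, $\sigma\in\gamma(s)$. A supervisor with policy $\gamma^N$ is valid if $L(G,\gamma^N)=\overline{K^\uparrow}$. A run-time error occurs at $s$ if $s\in L(G,\gamma^N)$ and $f^N(s)=\emptyset$. *)

From mathcomp Require Import all_boot.
Set Implicit Arguments. Unset Strict Implicit. Unset Printing Implicit Defensive.

Definition lang (Sigma : finType) := seq Sigma -> Prop.

Section LLP.
Variable Sigma : finType.

Definition pre (M : lang Sigma) : lang Sigma := fun t => exists u, M (t ++ u).
Definition quot (L : lang Sigma) (s : seq Sigma) : lang Sigma := fun t => L (s ++ t).
Definition trunc (L : lang Sigma) (N : nat) : lang Sigma := fun t => L t /\ size t <= N.
Definition lunion (A B : lang Sigma) : lang Sigma := fun t => A t \/ B t.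
Definition ldiff (A B : lang Sigma) : lang Sigma := fun t => A t /\ ~ B t.
Definition lsub (A B : lang Sigma) := forall t, A t -> B t.

(* uc : the uncontrollable events (Sigma_uc); Sigma_c is its complement. *)
Definition controllable (uc : pred Sigma) (M L : lang Sigma) :=
  forall s sigma, pre M s -> uc sigma -> L (rcons s sigma) -> pre M (rcons s sigma).

Definition supC (uc : pred Sigma) (M L : lang Sigma) : lang Sigma :=
  fun t => exists M', lsub M' M /\ controllable uc M' L /\ M' t.

Definition f_optm (uc : pred Sigma) (Lm K : lang Sigma) (N : nat) (s : seq Sigma)
  : lang Sigma :=
  supC uc
    (lunion (trunc (quot K s) N)
            (ldiff (trunc (quot (pre K) s) N) (trunc (quot (pre K) s) N.-1)))
    (trunc (quot (pre Lm) s) N).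

Definition gamma_optm (uc : pred Sigma) (Lm K : lang Sigma) (N : nat)
  (s : seq Sigma) (sigma : Sigma) : Prop :=
  pre (f_optm uc Lm K N s) [:: sigma] \/ (uc sigma /\ pre Lm (rcons s sigma)).

(* closed-loop language L(G, gamma), with L(G) = pre Lm *)
Inductive closed_loop (Lm : lang Sigma) (gamma : seq Sigma -> Sigma -> Prop)
  : seq Sigma -> Prop :=
| cl_nil : closed_loop Lm gamma [::]
| cl_step : forall s sigma, closed_loop Lm gamma s -> pre Lm (rcons s sigma) ->
    gamma s sigma -> closed_loop Lm gamma (rcons s sigma).

End LLP.

From mathcomp Require Import all_boot.
From mathcomp Require Import zify.

Set Implicit Arguments. Unset Strict Implicit. Unset Printing Implicit Defensive.

(* If the optimistic supervisor is valid, every string s of the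
   closed loop lies in the prefix closure of K^up, hence in the prefix closure
   of some controllable sublanguage M of K.  From M we build the look-ahead
   window of M at s: the continuations t with |t| <= N and st in pre(M) that
   either reach the horizon (|t| = N) or end in M.  This window
     - is contained in the language whose supremal controllable sublanguage
       defines f^N_optm(s) (needs N >= 1, so that horizon strings are new),
     - is controllable w.r.t. L(G)/s|_N, because M is controllable w.r.t. L(G),
     - is nonempty, since its prefix closure contains the empty string.
   Hence f^N_optm(s) contains the window and is nonempty: no run-time error. *)

Section Window.
Variable Sigma : finType.
Implicit Types (M K L : lang Sigma) (s t : seq Sigma).

Lemma pre_cat M a b : pre M (a ++ b) -> pre M a.
Proof. by case=> u Hu; exists (b ++ u); rewrite catA. Qed.

Definition window M (N : nat) s : lang Sigma :=
  fun t => size t <= N /\ pre M (s ++ t) /\ (size t = N \/ M (s ++ t)).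

(* A short continuation of s inside pre(M) can be extended inside pre(M) until
   it either ends in M or reaches the horizon, so it is a window prefix. *)
Lemma window_pre_intro M N s t :
  size t <= N -> pre M (s ++ t) -> pre (window M N s) t.
Proof.
move=> Ht [w Hw].
have [Hshort | Hlong] := leqP (size (t ++ w)) N.
  exists w; split=> //; split; last by right; rewrite catA.
  by exists [::]; rewrite cats0 catA.
pose w' := take (N - size t) w.
have Hsize : size (t ++ w') = N.
  by rewrite size_cat size_take; rewrite size_cat in Hlong; case: ifP; lia.
exists w'; split; first by rewrite Hsize.
split; last by left.
by exists (drop (N - size t) w); rewrite -!catA cat_take_drop catA.
Qed.

Lemma window_preP M N s t :
  pre (window M N s) t <-> size t <= N /\ pre M (s ++ t).
Proof.
split; last by case; exact: window_pre_intro.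
case=> u [Hsize [HpM _]]; split; first by rewrite size_cat in Hsize; lia.
by rewrite catA in HpM; exact: pre_cat HpM.
Qed.

Lemma window_sub_lookahead M K N s :
  1 <= N -> lsub M K ->
  lsub (window M N s)
       (lunion (trunc (quot K s) N)
               (ldiff (trunc (quot (pre K) s) N) (trunc (quot (pre K) s) N.-1))).
Proof.
move=> HN HMK t [Hsize [[w Hw] [Hhorizon | HM]]]; last by left; split=> //; exact: HMK.
right; split; first by split=> //; exists w; exact: HMK.
by case=> _; lia.
Qed.

Lemma window_controllable uc M L N s :
  controllable uc M L -> controllable uc (window M N s) (trunc (quot L s) N).
Proof.
move=> HMc v sigma /window_preP [_ Hv] Huc [HL Hsize].
apply/window_preP; split=> //.
by rewrite -rcons_cat; apply: HMc => //; rewrite rcons_cat.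
Qed.

Lemma window_nonempty M N s : pre M s -> exists t, window M N s t.
Proof.
move=> HpM.
have [t Ht] : pre (window M N s) [::] by apply/window_preP; rewrite cats0.
by exists t.
Qed.

End Window.

(* After any prefix s of K^up, the optimistic look-ahead language f^N_optm(s)
   is nonempty: it contains the window of a controllable witness M. *)
Lemma f_optm_nonempty (Sigma : finType) (uc : pred Sigma) (Lm K : lang Sigma)
    (N : nat) (s : seq Sigma) :
  1 <= N -> pre (supC uc K (pre Lm)) s -> exists t, f_optm uc Lm K N s t.
Proof.
move=> HN [u [M [HMK [HMc HMu]]]].
have HpM : pre M s by exists u.
have [t Ht] := window_nonempty N HpM.
exists t, (window M N s); split; [exact: window_sub_lookahead | split=> //].
exact: window_controllable.
Qed.

Theorem theorem3 (Sigma : finType) (uc : pred Sigma) (Lm K : lang Sigma) (N : nat) :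
  1 <= N ->
  lsub K Lm ->
  (forall t, K t <-> (pre K t /\ Lm t)) ->
  (forall s, closed_loop Lm (gamma_optm uc Lm K N) s <-> pre (supC uc K (pre Lm)) s) ->
  ~ (exists s, closed_loop Lm (gamma_optm uc Lm K N) s /\
               (forall t, ~ f_optm uc Lm K N s t)).
Proof.
move=> HN _ _ Hvalid [s [Hs Hempty]].
have [t Ht] := f_optm_nonempty HN (proj1 (Hvalid s) Hs).
exact: Hempty Ht.
Qed.
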